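(* Let $K$ be as in the context and let $F=a_1x_1^4+\cdots+a_{11}x_{11}^4$ with all $a_i\in K\setminus\{0\}$. If $F$ is of type $(3,0,2,1)$, then $F$ has a nontrivial zero in $K^{11}$.
   Context: $K$ is one of $\mathbb{Q}_2(\sqrt2),\mathbb{Q}_2(\sqrt{10}),\mathbb{Q}_2(\sqrt{-2}),\mathbb{Q}_2(\sqrt{-10})$, with uniformizer $\pi$ and valuation $v_\pi$. The level of the variable $x_i$ is $v_\pi(a_i)$, considered modulo $4$. For nonnegative integers $s_0,s_1,s_2,s_3$, the form is said to be of type $(s_0,s_1,s_2,s_3)$ if there exists $j\in\mathbb{Z}/4$ such that for each $i\in\{0,1,2,3\}$ the number of variables whose level is congruent to $i+j$ modulo $4$ is at least $s_i$ (so types differing by a cyclic permutation of the entries are the same type). *)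

From HB Require Import structures.
From mathcomp Require Import all_boot all_order all_algebra.
Set Implicit Arguments. Unset Strict Implicit. Unset Printing Implicit Defensive.
Import Order.TTheory GRing.Theory Num.Theory.
Local Open Scope ring_scope.

(* The 2-adic fields Q_2(sqrt d) are not in the libraries; we characterize
   them (up to isomorphism of valued fields) as fields K with a normalized
   discrete valuation v : K -> int (value on 0 irrelevant) such that
   char K = 0, v 2 = 2 (ramification index 2), residue field F_2,
   K complete for v, and d is a square in K. *)

Definition vge (K : fieldType) (v : K -> int) (x : K) (n : int) : Prop :=
  x = 0 \/ n <= v x.

Definition is_valuation (K : fieldType) (v : K -> int) : Prop :=
  (forall x y : K, x != 0 -> y != 0 -> v (x * y) = v x + v y) /\
  (forall x y : K, x != 0 -> y != 0 -> x + y != 0 ->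
      Num.min (v x) (v y) <= v (x + y)).

Definition v_cauchy (K : fieldType) (v : K -> int) (s : nat -> K) : Prop :=
  forall n : int, exists N : nat, forall m k : nat,
    (N <= m)%N -> (N <= k)%N -> vge v (s m - s k) n.

Definition v_converges (K : fieldType) (v : K -> int) (s : nat -> K) (l : K) : Prop :=
  forall n : int, exists N : nat, forall m : nat, (N <= m)%N -> vge v (s m - l) n.

Definition v_complete (K : fieldType) (v : K -> int) : Prop :=
  forall s : nat -> K, v_cauchy v s -> exists l : K, v_converges v s l.

Definition is_Q2_sqrt (K : fieldType) (v : K -> int) (d : int) : Prop :=
  is_valuation v /\
  (forall n : nat, (n.+1)%:R != (0 : K)) /\
  (exists pi : K, pi != 0 /\ v pi = 1) /\
  v 2%:R = 2 /\
  (forall x : K, vge v x 0 -> vge v x 1 \/ vge v (x - 1) 1) /\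
  v_complete v /\
  (exists r : K, r ^+ 2 = d%:~R).

Definition level (K : fieldType) (v : K -> int) (a : K) : int := (v a %% 4)%Z.

Definition of_type (K : fieldType) (v : K -> int) (n : nat) (a : 'I_n -> K)
    (s0 s1 s2 s3 : nat) : Prop :=
  exists j : 'I_4, forall i : 'I_4,
    (nth 0%N [:: s0; s1; s2; s3] i <=
      #|[set k : 'I_n | level v (a k) == (((i : nat) + j)%:Z %% 4)%Z]|)%N.

(* Rescaling the variables by powers of the uniformizer r (with r^2 = d) moves
   every coefficient into the valuation window [j, j+3] without changing its
   level, leaving coefficients A1, A2, A3 of valuation j, B1, B2 of valuation
   j+2 and C of valuation j+3.  As the residue field is F_2, two of the A's,
   say A1 and A2, satisfy v (A1 + A2) >= j+2.  With x2 = 1, choosing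
   y1, z in {0, 1}, x3, y2 in {0, r} and x1 in {1, 1 + r} cancels the binary
   digits at valuations j+2, ..., j+6 one at a time (x1 acts at j+5 because
   v ((1 + r)^4 - 1) = 5), so the form reaches valuation j+7 at a point with
   x1 a unit.  Since 1 + w is a fourth power
   whenever v w >= 7 (Hensel), rescaling x1 gives an exact zero. *)

From mathcomp Require Import all_boot all_order all_algebra.
From mathcomp Require Import zify ring.
Import Order.TTheory GRing.Theory Num.Theory.
Local Open Scope ring_scope.

Definition isotropic {K : fieldType} {I : finType} (a : I -> K) : Prop :=
  exists x : I -> K, (exists k, x k != 0) /\ \sum_k a k * x k ^+ 4 = 0.

Section Isotropy.
Variable K : fieldType.

Lemma isotropic_scale (I : finType) (a s : I -> K) :
  (forall k, s k != 0) -> isotropic (fun k => a k * s k ^+ 4) -> isotropic a.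
Proof.
move=> s0 [y [[k yk] e]]; exists (fun k => s k * y k); split.
  by exists k; rewrite mulf_neq0.
by apply: etrans e; apply: eq_bigr => i _; rewrite exprMn mulrA.
Qed.

Lemma zip_index {T : eqType} {U : Type} (u0 : U) {s : seq T} {y : seq U} :
  uniq s -> size y = size s -> zip s y = [seq (k, nth u0 y (index k s)) | k <- s].
Proof.
elim: s y => [|k s IH] [|u y] //= /andP [ks us] [sz].
rewrite eqxx (IH y us sz); congr (_ :: _); apply/eq_in_map => k' k's /=.
by rewrite ifN //; apply: contraNneq ks => ->.
Qed.

Lemma isotropic_of_zip (I : finType) (a : I -> K) (s : seq I) (y : seq K) :
  uniq s -> size y = size s -> has (fun t => t != 0) y ->
  \sum_(p <- zip s y) a p.1 * p.2 ^+ 4 = 0 -> isotropic a.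
Proof.
move=> us sz ynz e; pose x k := nth 0 y (index k s).
have zipE : zip s y = [seq (k, x k) | k <- s] := zip_index 0 us sz.
exists x; split.
  move: ynz; rewrite -(unzip2_zip (eq_leq sz)) zipE /unzip2 -map_comp has_map.
  by case/hasP => k _ nz; exists k.
rewrite zipE big_map /= in e.
rewrite (bigID (mem s)) /= -big_uniq // e add0r big1 // => k ks.
by rewrite /x memNindex // nth_default ?sz // expr0n mulr0.
Qed.

End Isotropy.

Section Valuation.
Variables (K : fieldType) (v : K -> int).
Hypothesis valM : forall {x y : K}, x != 0 -> y != 0 -> v (x * y) = v x + v y.
Hypothesis valD : forall {x y : K}, x != 0 -> y != 0 -> x + y != 0 ->
  Num.min (v x) (v y) <= v (x + y).

Lemma val1 : v 1 = 0.
Proof. by apply: (@addrI _ (v 1)); rewrite addr0 -valM ?oner_neq0 ?mulr1. Qed.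

Lemma valN {x} : x != 0 -> v (- x) = v x.
Proof.
have N1_neq0 : (-1 : K) != 0 by rewrite oppr_eq0 oner_neq0.
have valN1 : v (-1) = 0.
  by move: (valM N1_neq0 N1_neq0); rewrite mulrNN mulr1 val1; lia.
by move=> x0; rewrite -mulN1r valM // valN1 add0r.
Qed.

Lemma valV {x} : x != 0 -> v x^-1 = - v x.
Proof.
move=> x0; apply: (@addrI _ (v x)).
by rewrite addrN -valM ?invr_eq0 // divff // val1.
Qed.

Lemma valX x n : x != 0 -> v (x ^+ n) = n%:Z * v x.
Proof.
move=> x0; elim: n => [|n IH]; first by rewrite expr0 val1 mul0r.
by rewrite exprS valM ?expf_neq0 // IH; lia.
Qed.

Lemma valXz x (z : int) : x != 0 -> v (x ^ z) = z * v x.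
Proof.
move=> x0; case: z => n; first by rewrite -exprnP valX.
by rewrite NegzE -exprnN valV ?expf_neq0 // valX // mulNr.
Qed.

Lemma vge0 n : vge v 0 n.
Proof. by left. Qed.

Lemma vge_val x : vge v x (v x).
Proof. by right. Qed.

Lemma vgeW {x n m} : vge v x n -> m <= n -> vge v x m.
Proof. by case=> [->|h] hm; [left | right; lia]. Qed.

Lemma vgeN {x n} : vge v x n -> vge v (- x) n.
Proof.
case: (eqVneq x 0) => [-> _|x0]; first by rewrite oppr0; left.
by case=> [x_eq0|h]; [move: x0; rewrite x_eq0 eqxx | right; rewrite valN].
Qed.

Lemma vgeD {x y n} : vge v x n -> vge v y n -> vge v (x + y) n.
Proof.
case: (eqVneq x 0) => [-> _|x0]; first by rewrite add0r.
case: (eqVneq y 0) => [-> //|y0]; first by rewrite addr0.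
case: (eqVneq (x + y) 0) => [-> _ _|s0]; first exact: vge0.
case=> [/eqP|hx]; first by rewrite (negbTE x0).
case=> [/eqP|hy]; first by rewrite (negbTE y0).
by right; move: (valD x0 y0 s0); lia.
Qed.

Lemma vgeB {x y n} : vge v x n -> vge v y n -> vge v (x - y) n.
Proof. by move=> hx /vgeN; apply: vgeD. Qed.

Lemma vgeM {x y n m} : vge v x n -> vge v y m -> vge v (x * y) (n + m).
Proof.
case: (eqVneq x 0) => [-> _ _|x0]; first by rewrite mul0r; left.
case: (eqVneq y 0) => [-> _ _|y0]; first by rewrite mulr0; left.
case=> [/eqP|hx]; first by rewrite (negbTE x0).
case=> [/eqP|hy]; first by rewrite (negbTE y0).
by right; rewrite valM //; lia.
Qed.

Lemma vge_div {x y n} : vge v x n -> y != 0 -> vge v (x / y) (n - v y).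
Proof. by move=> hx y0; rewrite -(valV y0); apply: vgeM hx (vge_val _). Qed.

Lemma vgeP x n : vge v x n \/ (x != 0 /\ v x < n).
Proof.
case: (eqVneq x 0) => [->|x0]; first by left; left.
by case: (leP n (v x)) => h; [left; right | right].
Qed.

Lemma vge_eq0 x : (forall n, vge v x n) -> x = 0.
Proof.
move=> h; case: (eqVneq x 0) => // x0.
by case: (h (v x + 1)) => [/eqP|]; [rewrite (negbTE x0) | lia].
Qed.

Lemma valD_dominant {x y : K} : x != 0 -> vge v y (v x + 1) -> x + y != 0 /\ v (x + y) = v x.
Proof.
move=> x0 hy.
have s0 : x + y != 0.
  apply/eqP => /eqP; rewrite addr_eq0 => /eqP x_eq.
  move: x0 hy; rewrite x_eq oppr_eq0 => y0.
  by case=> [/eqP|]; [rewrite (negbTE y0) | rewrite valN //; lia].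
split=> //; case: (eqVneq y 0) => [->|y0]; first by rewrite addr0.
case: hy => [/eqP|hy]; first by rewrite (negbTE y0).
have Ny0 : - y != 0 by rewrite oppr_eq0.
have := valD x0 y0 s0; have := valD s0 Ny0; rewrite addrK valN // => /(_ x0).
by rewrite !ge_min; lia.
Qed.

Lemma vge_telescope {s : nat -> K} {m : int} :
  (forall n, vge v (s n.+1 - s n) (m + n%:Z)) ->
  forall p k, vge v (s (p + k)%N - s p) (m + p%:Z).
Proof.
move=> steps p; elim=> [|k IH]; first by rewrite addn0 subrr; apply: vge0.
rewrite addnS -(subrK (s (p + k)%N) (s (p + k).+1)) -addrA.
by apply: vgeD IH; apply: vgeW (steps _) _; lia.
Qed.

Lemma v_cauchy_of_steps {s : nat -> K} {m : int} :
  (forall n, vge v (s n.+1 - s n) (m + n%:Z)) -> v_cauchy v s.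
Proof.
move=> steps n; exists `|n - m|%N => a b ha hb.
have -> : s a - s b = (s (`|n - m| + (a - `|n - m|))%N - s `|n - m|%N)
                    - (s (`|n - m| + (b - `|n - m|))%N - s `|n - m|%N).
  by rewrite !subnKC //; ring.
by apply: vgeW (vgeB (vge_telescope steps _ _) (vge_telescope steps _ _)) _; lia.
Qed.

Lemma vge_limit {s : nat -> K} {l : K} {m : int} :
  v_converges v s l -> (forall n, vge v (s n) m) -> vge v l m.
Proof.
move=> sl sm; have [N /(_ N (leqnn N)) hN] := sl m.
by rewrite -[l](subKr (s N)); apply: vgeB.
Qed.

Section Dyadic.
Hypothesis val2 : v 2 = 2.
Hypothesis two_neq0 : (2 : K) != 0.
Hypothesis residue_F2 : forall x : K, vge v x 0 -> vge v x 1 \/ vge v (x - 1) 1.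

Lemma vge2 : vge v 2 2.
Proof. by right; rewrite val2. Qed.

Lemma vge_add_eqval {x y : K} : x != 0 -> y != 0 -> v x = v y ->
  vge v (x + y) (v y + 1).
Proof.
move=> x0 y0 xy.
have q0 : x / y != 0 by rewrite mulf_neq0 ?invr_eq0.
have vq : v (x / y) = 0 by rewrite valM ?invr_eq0 // valV // xy addrN.
have q1 : vge v (x / y - 1) 1.
  have : vge v (x / y) 0 by right; rewrite vq.
  by case/residue_F2 => // -[/eqP|]; [rewrite (negbTE q0) | rewrite vq].
have -> : x + y = (x / y - 1 + 2) * y by rewrite mulrDl mulrBl divfK // mul1r; ring.
by rewrite [v y + 1]addrC; apply: vgeM (vge_val y); apply: vgeD q1 (vgeW vge2 _).
Qed.

Lemma vge_add_pair {x y z : K} {L : int} :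
  x != 0 -> y != 0 -> z != 0 -> v x = L -> v y = L -> v z = L ->
  [\/ vge v (x + y) (L + 2), vge v (x + z) (L + 2) | vge v (y + z) (L + 2)].
Proof.
move=> x0 y0 z0 vx vy vz.
have val_sum (u w : K) : u != 0 -> w != 0 -> v u = L -> v w = L -> u + w != 0 ->
    v (u + w) < L + 2 -> v (u + w) = L + 1.
  move=> u0 w0 vu vw uw0; have [/eqP|] := vge_add_eqval u0 w0 (etrans vu (esym vw)).
    by rewrite (negbTE uw0).
  by rewrite vw; lia.
case: (vgeP (x + y) (L + 2)) => [hxy|[xy0 /(val_sum _ _ x0 y0 vx vy xy0) vxy]].
  by constructor 1.
case: (vgeP (x + z) (L + 2)) => [hxz|[xz0 /(val_sum _ _ x0 z0 vx vz xz0) vxz]].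
  by constructor 2.
constructor 3; have := vge_add_eqval xy0 xz0 (etrans vxy (esym vxz)).
have -> : y + z = (x + y) + (x + z) - 2 * x by ring.
move=> h; apply: vgeB; first by apply: vgeW h _; lia.
by apply: vgeW (vgeM vge2 (vge_val x)) _; lia.
Qed.

Lemma vge_add_digit {T c : K} {s : int} : vge v T s -> c != 0 -> v c = s ->
  exists2 e : K, e = 0 \/ e = 1 & vge v (T + c * e) (s + 1).
Proof.
move=> hT c0 vc; case: (vgeP T (s + 1)) => [h|[T0 hT1]].
  by exists 0; [left | rewrite mulr0 addr0].
exists 1; [by right | rewrite mulr1 -vc].
by apply: vge_add_eqval => //; case: hT => [/eqP|]; [rewrite (negbTE T0) | lia].
Qed.

Lemma vge_int (z : int) : vge v z%:~R 0.
Proof.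
have vge_nat n : vge v n%:R 0.
  elim: n => [|n IH]; first exact: vge0.
  by rewrite mulrSr; apply: vgeD IH _; right; rewrite val1.
by case: z => n; rewrite ?NegzE ?mulrNz; [|apply: vgeN]; apply: vge_nat.
Qed.

Lemma val_1_add_2mul {y : K} : vge v y 0 -> 1 + 2 * y != 0 /\ v (1 + 2 * y) = 0.
Proof.
move=> hy; rewrite -val1; apply: valD_dominant; first exact: oner_neq0.
by rewrite val1; apply: vgeW (vgeM vge2 hy) _.
Qed.

Lemma val_rho (k : int) (r : K) : r ^+ 2 = (4 * k + 2)%:~R ->
  [/\ r != 0, v r = 1, (1 + r) ^+ 4 - 1 != 0 & v ((1 + r) ^+ 4 - 1) = 5].
Proof.
move=> hr; pose e : K := 1 + 2 * k%:~R.
have [e0 ve] := val_1_add_2mul (vge_int k).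
have re : r ^+ 2 = 2 * e by rewrite hr /e; ring.
have r0 : r != 0.
  by apply: contra_neq (mulf_neq0 two_neq0 e0) => r0; rewrite -re r0 expr0n.
have vr : v r = 1 by move: (valX r 2 r0); rewrite re valM // val2 ve; lia.
have [f0 vf] : 1 + 2 * e != 0 /\ v (1 + 2 * e) = 0.
  by apply: val_1_add_2mul; right; rewrite /e ve.
have rhoE : (1 + r) ^+ 4 - 1 = 2 * 2 * r * (1 + 2 * e) + 2 * 2 * e * (2 * (2 + k)%:~R).
  rewrite (_ : (1 + r) ^+ 4 - 1 = 4 * r * (1 + r ^+ 2) + r ^+ 2 * (6 + r ^+ 2)); last by ring.
  by rewrite re /e; ring.
have X0 : 2 * 2 * r * (1 + 2 * e) != 0 by rewrite !mulf_neq0.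
have vX : v (2 * 2 * r * (1 + 2 * e)) = 5 by rewrite !valM ?mulf_neq0 // val2 vr vf.
have hY : vge v (2 * 2 * e * (2 * (2 + k)%:~R)) (v (2 * 2 * r * (1 + 2 * e)) + 1).
  rewrite vX; apply: vgeW (vgeM (vgeM (vgeM vge2 vge2) (vge_val e))
                                (vgeM vge2 (vge_int (2 + k)))) _.
  by rewrite /e ve.
have [rho0 vrho] := valD_dominant X0 hY.
by rewrite rhoE vrho vX.
Qed.

Section Complete.
Hypothesis complete : v_complete v.

(* Fixed-point iteration for s = (w - s^2) / 2, i.e. (1 + s)^2 = 1 + w. *)
Fixpoint sqrt_approx (w : K) (n : nat) : K :=
  if n is n'.+1 then (w - sqrt_approx w n' ^+ 2) / 2 else 0.

Lemma sqrt_approx_bounds {w : K} {m : int} : 3 <= m -> vge v w (m + 2) ->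
  forall n, vge v (sqrt_approx w n) m /\
            vge v (sqrt_approx w n.+1 - sqrt_approx w n) (m + n%:Z).
Proof.
move=> hm hw; elim=> [|n [IH1 IH2]] /=.
  split; first exact: vge0.
  rewrite expr0n /= !subr0; apply: vgeW (vge_div hw two_neq0) _; rewrite val2; lia.
set f := sqrt_approx w in IH1 IH2 *.
have h1 : vge v (f n.+1) m.
  by rewrite -(subrK (f n) (f n.+1)); apply: vgeD IH1; apply: vgeW IH2 _; lia.
split=> //.
have -> : (w - f n.+1 ^+ 2) / 2 - f n.+1 = - ((f n.+1 - f n) * (f n.+1 + f n)) / 2.
  by rewrite /f /=; field.
apply: vgeW (vge_div (vgeN (vgeM IH2 (vgeD h1 IH1))) two_neq0) _; rewrite val2; lia.
Qed.

Lemma sqrt_lift {m : int} {w : K} : 3 <= m -> vge v w (m + 2) ->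
  exists2 s, vge v s m & (1 + s) ^+ 2 = 1 + w.
Proof.
move=> hm hw; pose f := sqrt_approx w.
have bounds := sqrt_approx_bounds hm hw.
have [l fl] := complete _ (v_cauchy_of_steps (fun n => (bounds n).2)).
have lm : vge v l m := vge_limit fl (fun n => (bounds n).1).
exists l => //; apply/eqP; rewrite -subr_eq0; apply/eqP/vge_eq0 => n.
have [N fN] := fl n.
have wE : w = 2 * f N.+1 + f N ^+ 2 by rewrite /f /=; field.
have -> : (1 + l) ^+ 2 - (1 + w) = (l - f N) * (l + f N) + 2 * (l - f N.+1).
  by rewrite wE; ring.
have near k : (N <= k)%N -> vge v (l - f k) n by move/fN/vgeN; rewrite opprB.
apply: vgeD; last by apply: vgeW (vgeM vge2 (near _ (leqnSn N))) _; lia.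
apply: vgeW (vgeM (near _ (leqnn N)) (vgeD lm (bounds N).1 : vge v _ m)) _; lia.
Qed.

Lemma fourth_root_lift {w : K} : vge v w 7 -> exists t, t ^+ 4 = 1 + w.
Proof.
move=> hw; have [s hs <-] := sqrt_lift (m := 5) erefl hw.
have [s' _ <-] := sqrt_lift (m := 3) erefl hs.
by exists (1 + s'); rewrite -exprM.
Qed.

Lemma fourth_root_solve {P R : K} : P != 0 -> vge v (P + R) (v P + 7) ->
  exists2 t, t != 0 & P * t ^+ 4 + R = 0.
Proof.
move=> P0 hPR; pose w := - (P + R) / P.
have hw : vge v w 7 by apply: vgeW (vge_div (vgeN hPR) P0) _; lia.
have [t ht] := fourth_root_lift hw.
exists t; last by rewrite ht /w; field.
have [w1 _] : 1 + w != 0 /\ v (1 + w) = v 1.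
  by apply: valD_dominant (oner_neq0 K) _; rewrite val1; apply: vgeW hw _.
by apply: contra_neq w1 => t0; rewrite -ht t0 expr0n.
Qed.

Section Uniformizer.
Variable r : K.
Hypotheses (r_neq0 : r != 0) (val_r : v r = 1).
Local Notation rho := ((1 + r) ^+ 4 - 1).
Hypotheses (rho_neq0 : rho != 0) (val_rho5 : v rho = 5).

Lemma bit_expr4 {e : K} : e = 0 \/ e = 1 -> e ^+ 4 = e.
Proof. by case=> ->; rewrite ?expr0n ?expr1n. Qed.

Lemma expr4_1_add_bit {e : K} : e = 0 \/ e = 1 ->
  (1 + r * e) ^+ 4 = 1 + rho * e.
Proof. by case=> ->; rewrite ?mulr0 ?addr0 ?expr1n // !mulr1 addrCA subrr addr0. Qed.

Lemma val_1_add_bit {e : K} : e = 0 \/ e = 1 -> 1 + r * e != 0 /\ v (1 + r * e) = 0.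
Proof.
move=> eb; rewrite -val1; apply: valD_dominant; first exact: oner_neq0.
by case: eb => ->; [rewrite mulr0; apply: vge0 | rewrite mulr1 val1; right; rewrite val_r].
Qed.

Lemma zero_of_pair {L : int} {A1 A2 A3 B1 B2 C : K} :
  A1 != 0 -> A3 != 0 -> B1 != 0 -> B2 != 0 -> C != 0 ->
  v A1 = L -> v A3 = L -> v B1 = L + 2 -> v B2 = L + 2 -> v C = L + 3 ->
  vge v (A1 + A2) (L + 2) ->
  exists x1 x3 y1 y2 z : K,
    A1 * x1 ^+ 4 + A2 + A3 * x3 ^+ 4 + B1 * y1 ^+ 4 + B2 * y2 ^+ 4 + C * z ^+ 4 = 0.
Proof.
move=> A10 A30 B10 B20 C0 vA1 vA3 vB1 vB2 vC h0.
have r4_neq0 : r ^+ 4 != 0 by rewrite expf_neq0.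
have vr4 : v (r ^+ 4) = 4 by rewrite valX // val_r.
have vC' : v C = L + 2 + 1 by rewrite vC -addrA.
have vA3' : v (A3 * r ^+ 4) = L + 2 + 1 + 1 by rewrite valM // vA3 vr4 -!addrA.
have vA1' : v (A1 * rho) = L + 2 + 1 + 1 + 1 by rewrite valM // vA1 val_rho5 -!addrA.
have vB2' : v (B2 * r ^+ 4) = L + 2 + 1 + 1 + 1 + 1 by rewrite valM // vB2 vr4 -!addrA.
(* The digit at L+5 moves x1 from 1 to 1 + r, which adds A1 rho to A1 x1^4. *)
have [e1 e1b h1] := vge_add_digit h0 B10 vB1.
have [e2 e2b h2] := vge_add_digit h1 C0 vC'.
have [e3 e3b h3] := vge_add_digit h2 (mulf_neq0 A30 r4_neq0) vA3'.
have [e4 e4b h4] := vge_add_digit h3 (mulf_neq0 A10 rho_neq0) vA1'.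
have [e5 e5b h5] := vge_add_digit h4 (mulf_neq0 B20 r4_neq0) vB2'.
have [x1_neq0 val_x1] := val_1_add_bit e4b.
pose P := A1 * (1 + r * e4) ^+ 4.
have P0 : P != 0 by rewrite mulf_neq0 ?expf_neq0.
have vP : v P = L by rewrite valM ?expf_neq0 // valX // val_x1 vA1 mulr0 addr0.
pose R := A2 + A3 * (r * e3) ^+ 4 + B1 * e1 ^+ 4 + B2 * (r * e5) ^+ 4 + C * e2 ^+ 4.
have hPR : vge v (P + R) (v P + 7).
  have -> : P + R = A1 + A2 + B1 * e1 + C * e2 + A3 * r ^+ 4 * e3 + A1 * rho * e4
                    + B2 * r ^+ 4 * e5.
    rewrite /P /R (expr4_1_add_bit e4b) !exprMn (bit_expr4 e1b) (bit_expr4 e2b).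
    by rewrite (bit_expr4 e3b) (bit_expr4 e5b); ring.
  by rewrite vP; apply: vgeW h5 _; rewrite -!addrA.
have [t _ ht] := fourth_root_solve P0 hPR.
exists ((1 + r * e4) * t), (r * e3), e1, (r * e5), e2.
by rewrite -ht /P /R exprMn; ring.
Qed.

Lemma isotropic_of_pair {I : finType} {a : I -> K} {L : int} {p1 p2 p3 q1 q2 c : I} :
  (forall k, a k != 0) ->
  v (a p1) = L -> v (a p2) = L -> v (a p3) = L ->
  v (a q1) = L + 2 -> v (a q2) = L + 2 -> v (a c) = L + 3 ->
  p1 != p2 -> p1 != p3 -> p2 != p3 -> q1 != q2 ->
  vge v (a p1 + a p2) (L + 2) -> isotropic a.
Proof.
move=> a0 vp1 vp2 vp3 vq1 vq2 vc p12 p13 p23 q12 h12.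
have us : uniq [:: p1; p2; p3; q1; q2; c].
  have ne k k' : - L + v (a k) != - L + v (a k') -> k != k'.
    by apply: contra_neq => ->.
  rewrite /= !inE !negb_or p12 p13 p23 q12 /=.
  by do ![apply/andP; split | apply: ne; rewrite ?vp1 ?vp2 ?vp3 ?vq1 ?vq2 ?vc ?addNr ?addKr].
have [x1 [x3 [y1 [y2 [z e]]]]] :=
  zero_of_pair (a0 p1) (a0 p3) (a0 q1) (a0 q2) (a0 c) vp1 vp3 vq1 vq2 vc h12.
apply: (@isotropic_of_zip _ _ a [:: p1; p2; p3; q1; q2; c] [:: x1; 1; x3; y1; y2; z]).
- exact: us.
- by [].
- by rewrite /= oner_neq0 orbT.
- by rewrite !big_cons big_nil /= -[RHS]e expr1n; ring.
Qed.

Lemma isotropic_of_levels (I : finType) (a : I -> K) (L : int) :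
  (forall k, a k != 0) ->
  (2 < #|[set k | v (a k) == L]|)%N -> (1 < #|[set k | v (a k) == (L + 2)%R]|)%N ->
  (0 < #|[set k | v (a k) == (L + 3)%R]|)%N -> isotropic a.
Proof.
move=> a0 /card_gt2P[p1 [p2 [p3 [[+ + +] [p12 p23 p31]]]]].
rewrite !inE => /eqP vp1 /eqP vp2 /eqP vp3.
move=> /card_gt1P[q1 [q2 [+ + q12]]]; rewrite !inE => /eqP vq1 /eqP vq2.
move=> /card_gt0P[c]; rewrite inE => /eqP vc.
have p13 : p1 != p3 by rewrite eq_sym.
case: (vge_add_pair (a0 p1) (a0 p2) (a0 p3) vp1 vp2 vp3) => h.
- exact: (isotropic_of_pair a0 vp1 vp2 vp3 vq1 vq2 vc p12 p13 p23 q12 h).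
- have p32 : p3 != p2 by rewrite eq_sym.
  exact: (isotropic_of_pair a0 vp1 vp3 vp2 vq1 vq2 vc p13 p12 p32 q12 h).
- have p21 : p2 != p1 by rewrite eq_sym.
  exact: (isotropic_of_pair a0 vp2 vp3 vp1 vq1 vq2 vc p23 p21 p31 q12 h).
Qed.

Lemma val_scale_window (j : int) {c : K} : c != 0 ->
  let b := c * (r ^ (- divz (v c - j) 4)) ^+ 4 in
  b != 0 /\ v b = j + modz (v c - j) 4.
Proof.
move=> c0 /=; have s0 : r ^ (- divz (v c - j) 4) != 0 by rewrite expfz_neq0.
split; first by rewrite mulf_neq0 ?expf_neq0.
rewrite valM ?expf_neq0 // valX // valXz // val_r; lia.
Qed.

Lemma isotropic_of_type (n : nat) (a : 'I_n -> K) :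
  (forall k, a k != 0) -> of_type v a 3 0 2 1 -> isotropic a.
Proof.
move=> a0 [j hj]; pose s k := r ^ (- divz (v (a k) - j%:Z) 4).
apply: (@isotropic_scale _ _ a s) => [k|]; first by rewrite expfz_neq0.
have b0 k : a k * s k ^+ 4 != 0 := (val_scale_window j (a0 k)).1.
have vb k : v (a k * s k ^+ 4) = j%:Z + modz (v (a k) - j%:Z) 4 :=
  (val_scale_window j (a0 k)).2.
have levelE (i : nat) : (i < 4)%N ->
    [set k | level v (a k) == (((i : nat) + j)%:Z %% 4)%Z] =
    [set k | v (a k * s k ^+ 4) == j%:Z + i%:Z].
  by move=> i4; apply/setP => k; rewrite !inE vb /level; apply/eqP/eqP; lia.
apply: (@isotropic_of_levels _ _ j%:Z) => //.
- by move: (hj (@Ordinal 4 0 isT)); rewrite levelE // addr0.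
- by move: (hj (@Ordinal 4 2 isT)); rewrite levelE.
- by move: (hj (@Ordinal 4 3 isT)); rewrite levelE.
Qed.

End Uniformizer.

End Complete.

End Dyadic.

End Valuation.

Theorem mainTheorem7 (K : fieldType) (v : K -> int) (d : int) :
  d \in [:: 2; 10; -2; -10] ->
  is_Q2_sqrt v d ->
  forall a : 'I_11 -> K,
    (forall k, a k != 0) ->
    of_type v a 3 0 2 1 ->
    exists x : 'I_11 -> K, (exists k, x k != 0) /\ \sum_(k < 11) a k * x k ^+ 4 = 0.
Proof.
move=> hd [[valM valD] [char0 [_ [val2 [residue_F2 [complete [r hr]]]]]]] a a0 ht.
have [k dk] : exists k : int, d = 4 * k + 2.
  by move: hd; rewrite !inE => /or4P[] /eqP ->;
    [exists 0 | exists 2 | exists (-1) | exists (-3)].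
rewrite dk in hr; have two_neq0 : (2 : K) != 0 := char0 1%N.
have [r0 vr rho0 vrho] := val_rho _ _ valM valD val2 two_neq0 _ _ hr.
exact: isotropic_of_type _ _ valM valD val2 two_neq0 residue_F2 complete _
  r0 vr rho0 vrho _ _ a0 ht.
Qed.
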